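(* The size of the smallest string attractor of the length-$n$ prefix $\mathbf{vtm}[0..n-1]$ of the ternary word $\mathbf{vtm}$ is $$\begin{cases}1,& n=1;\\ 2,& n=2;\\ 3,& 3\le n\le 6;\\ 4,& n\ge 7.\end{cases}$$
   Context: The word $\mathbf{vtm}=210201\cdots$ is the infinite fixed point, starting with $2$, of the morphism $2\mapsto 210$, $1\mapsto 20$, $0\mapsto 1$; it is indexed starting at $0$. A string attractor of a finite word $w=w[0..n-1]$ is a set $S\subseteq\{0,\ldots,n-1\}$ such that every nonempty factor $f$ of $w$ has an occurrence $w[p..q]=f$ with $p\le i\le q$ for some $i\in S$. *)

From mathcomp Require Import all_boot.
Set Implicit Arguments. Unset Strict Implicit. Unset Printing Implicit Defensive.

Definition vtm_morph (a : nat) : seq nat :=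
  match a with
  | 2 => [:: 2; 1; 0]
  | 1 => [:: 2; 0]
  | _ => [:: 1]
  end.

Definition vtm_apply (w : seq nat) : seq nat := flatten (map vtm_morph w).

(* phi^k(2); each is a prefix of the next, and its length is >= k+1. *)
Definition vtm_iter (k : nat) : seq nat := iter k vtm_apply [:: 2].

(* vtm[i], indexed from 0: the i-th letter of phi^(i)(2), whose length exceeds i. *)
Definition vtm (i : nat) : nat := nth 0 (vtm_iter i) i.

Definition vtm_prefix (n : nat) : seq nat := mkseq vtm n.

Definition factor (w : seq nat) (p q : nat) : seq nat := take (q - p).+1 (drop p w).

Definition string_attractor (w : seq nat) (S : {set 'I_(size w)}) : Prop :=
  forall i j : nat, i <= j < size w ->
    exists p q : nat, [/\ p <= q < size w,
      factor w p q = factor w i j &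
      exists2 s : 'I_(size w), s \in S & p <= s <= q].

Definition smallest_attractor_size (w : seq nat) (k : nat) : Prop :=
  (exists S : {set 'I_(size w)}, string_attractor S /\ #|S| = k) /\
  (forall S : {set 'I_(size w)}, string_attractor S -> k <= #|S|).

From mathcomp Require Import all_boot zify.
From Stdlib Require Import NArith.

(* vtm is the difference word of the Thue-Morse word t: vtm[i] = 1 + t[i+1] - t[i].
   Lower bound: vtm[0..13] has ten distinct factors of length 3 and every position
   lies in at most three windows of length 3, so for n >= 14 an attractor has at
   least four positions.  Upper bound: a position s of vtm is the pair t[s] t[s+1],
   so it suffices to find S such that every factor of t[0..N] of length >= 2 has an
   occurrence containing some s, s+1 with s in S.  Since t[2m] = t[m] and
   t[2m+1] = ~ t[m], such an S for t up to N/2 gives 2S+1 for t up to N; three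
   explicit sets of size four start this doubling.  The prefixes of length at most
   13 are settled by exhaustive search. *)

Fixpoint tm_pos (p : positive) : bool :=
  match p with xH => true | xO q => tm_pos q | xI q => ~~ tm_pos q end.

Definition tm (n : nat) : bool :=
  if N.of_nat n is Npos p then tm_pos p else false.

Lemma tm_double n : tm n.*2 = tm n.
Proof.
have -> : n.*2 = (2 * n)%coq_nat by rewrite -muln2 mulnC.
by rewrite /tm Nat2N.inj_double; case: (N.of_nat n).
Qed.

Lemma tm_doubleS n : tm n.*2.+1 = ~~ tm n.
Proof.
have -> : n.*2.+1 = ((2 * n)%coq_nat).+1 by rewrite -muln2 mulnC.
by rewrite /tm Nat2N.inj_succ_double; case: (N.of_nat n).
Qed.

Lemma tm_double_add m x : tm (m.*2 + x) = tm (m + x %/ 2) (+) odd x.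
Proof.
have -> : m.*2 + x = (m + x %/ 2).*2 + odd x.
  by rewrite -modn2; have := divn_eq x 2; lia.
by case: (odd x); rewrite ?addn1 ?addn0 ?tm_doubleS ?tm_double ?addbT ?addbF.
Qed.

Definition tm_diff (i : nat) : nat := (tm i.+1).+1 - tm i.

Lemma vtm_morph_tm_diff N :
  vtm_morph (tm_diff N) = [seq tm_diff i | i <- iota (N.*2 + tm N) (tm_diff N).+1].
Proof.
have tm2 := tm_double N; have tm2S := tm_doubleS N.
have tm2SS : tm N.*2.+2 = tm N.+1 by rewrite -doubleS tm_double.
have tm2SSS : tm N.*2.+3 = ~~ tm N.+1 by rewrite -doubleS tm_doubleS.
rewrite /tm_diff; move: tm2 tm2S tm2SS tm2SSS.
by case: (tm N); case: (tm N.+1) => /= tm2 tm2S tm2SS tm2SSS;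
  rewrite ?addn0 ?addn1 /tm_diff ?tm2 ?tm2S ?tm2SS ?tm2SSS.
Qed.

Lemma tm_diff_block_end N : N.*2 + tm N + (tm_diff N).+1 = N.+1.*2 + tm N.+1.
Proof. by rewrite doubleS /tm_diff; case: (tm N); case: (tm N.+1); lia. Qed.

Lemma vtm_apply_tm_diff N : vtm_apply (mkseq tm_diff N) = mkseq tm_diff (N.*2 + tm N).
Proof.
elim: N => [//|N IH].
rewrite /vtm_apply mkseqS map_rcons flatten_rcons -/(vtm_apply _) IH.
rewrite vtm_morph_tm_diff /mkseq -map_cat -{2}(add0n (N.*2 + tm N)) -iotaD.
by rewrite tm_diff_block_end.
Qed.

Lemma vtm_iter_tm_diff k : exists2 M, k < M & vtm_iter k = mkseq tm_diff M.
Proof.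
elim: k => [|k [M ltkM IH]]; first by exists 1.
exists (M.*2 + tm M); first by lia.
by rewrite /vtm_iter iterS -/(vtm_iter k) IH vtm_apply_tm_diff.
Qed.

Lemma vtmE i : vtm i = tm_diff i.
Proof. by have [M ltiM E] := vtm_iter_tm_diff i; rewrite /vtm E nth_mkseq. Qed.

Lemma vtm_prefixE n : vtm_prefix n = mkseq tm_diff n.
Proof. by apply: eq_mkseq => i; rewrite vtmE. Qed.

Lemma size_factor (w : seq nat) p q : p <= q < size w -> size (factor w p q) = (q - p).+1.
Proof. by move=> lepq; rewrite /factor size_take size_drop; case: ifP; lia. Qed.

Lemma factor_mkseq (f : nat -> nat) n p q : p <= q < n ->
  factor (mkseq f n) p q = mkseq (fun d => f (p + d)) (q - p).+1.
Proof.
move=> lepq; rewrite /factor /mkseq -map_drop -map_take drop_iota take_iota.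
rewrite add0n (minn_idPl _); last by lia.
by rewrite -{1}(addn0 p) iotaDl -map_comp.
Qed.

Lemma card_set_mem_seq n (l : seq nat) : #|[set x : 'I_n | val x \in l]| <= size l.
Proof.
rewrite cardE -(size_map val).
apply: uniq_leq_size; first by rewrite map_inj_uniq ?enum_uniq //; exact: val_inj.
by move=> y /mapP [x]; rewrite mem_enum inE => ? ->.
Qed.

Lemma smallest_attractor_sizeI (w : seq nat) k :
  (exists S : {set 'I_(size w)}, string_attractor S /\ #|S| <= k) ->
  (forall S : {set 'I_(size w)}, string_attractor S -> k <= #|S|) ->
  smallest_attractor_size w k.
Proof.
move=> [S [attS leSk]] min; split=> //.
by exists S; split=> //; apply/eqP; rewrite eqn_leq leSk min.
Qed.

Lemma attractor_count_factors (w : seq nat) (S : {set 'I_(size w)}) L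
    (F : seq (seq nat)) :
  string_attractor S -> uniq F ->
  (forall f, f \in F -> exists2 i, i + L < size w & f = factor w i (i + L)) ->
  size F <= #|S| * L.+1.
Proof.
move=> attS uniqF factorsF.
pose occurrence (sd : 'I_(size w) * 'I_L.+1) :=
  factor w (sd.1 - sd.2) (sd.1 - sd.2 + L).
suff sub : {subset F <= map occurrence (enum (setX S [set: 'I_L.+1]))}.
  by have := uniq_leq_size uniqF sub; rewrite size_map -cardE cardsX cardsT card_ord.
move=> f /factorsF [i ltiL ->].
have [p [q [/andP [lepq ltq] Epq [s Ss /andP [leps lesq]]]]] := attS i (i + L) ltac:(lia).
have Eq : q = p + L.
  by have := size_factor w p q ltac:(lia); rewrite Epq size_factor; lia.
have ltd : s - p < L.+1 by lia.
apply/mapP; exists (s, Ordinal ltd); first by rewrite mem_enum in_setX Ss in_setT.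
by rewrite /occurrence /= -Epq Eq; congr factor; lia.
Qed.

Definition attractorb (w l : seq nat) : bool :=
  all (fun i => all (fun j =>
    has (fun p => has (fun s => p <= s <= p + (j - i)) l &&
                  (factor w p (p + (j - i)) == factor w i j))
        (iota 0 (size w - (j - i))))
      (iota i (size w - i))) (iota 0 (size w)).

Lemma attractorb_sound (w l : seq nat) :
  attractorb w l -> string_attractor [set x : 'I_(size w) | val x \in l].
Proof.
move=> /allP att i j leij.
have /allP att_i := att i ltac:(rewrite mem_iota; lia).
have /hasP [p] := att_i j ltac:(rewrite mem_iota; lia).
rewrite mem_iota => ltp /andP [/hasP [s ls lesp] /eqP Epq].
exists p, (p + (j - i)); split=> //; first by lia.
have lt_s : s < size w by lia.
by exists (Ordinal lt_s); rewrite ?inE.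
Qed.

Lemma attractorb_complete (w : seq nat) (S : {set 'I_(size w)}) :
  string_attractor S -> attractorb w [seq val x | x <- enum S].
Proof.
move=> attS; apply/allP => i; rewrite mem_iota => lti.
apply/allP => j; rewrite mem_iota => /andP [leij ltj].
have {lti}{}ltj : j < size w by lia.
have [p [q [/andP [lepq ltq] Epq [s Ss le_s]]]] := attS i j ltac:(lia).
have Eqp : q - p = j - i.
  by have := size_factor w p q ltac:(lia); rewrite Epq size_factor; lia.
apply/hasP; exists p; first by rewrite mem_iota; lia.
rewrite -Eqp subnKC // Epq eqxx andbT; apply/hasP; exists (val s) => //.
by apply: map_f; rewrite mem_enum.
Qed.

Fixpoint subseqs_upto (m : nat) (s : seq nat) : seq (seq nat) :=
  if s is x :: s' then
    subseqs_upto m s' ++ (if m is m'.+1 then map (cons x) (subseqs_upto m' s') else [::])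
  else [:: [::]].

Lemma mem_subseqs_upto m (s t : seq nat) :
  subseq t s -> size t <= m -> t \in subseqs_upto m s.
Proof.
elim: s m t => [|x s IH] m t; first by move/eqP->.
case: t => [|y t] /=; first by rewrite mem_cat IH ?sub0seq.
case: eqP => [->|_] sub le; rewrite mem_cat; last by rewrite IH.
by case: m le => // m le; rewrite (map_f (cons x) (IH m t sub le)) orbT.
Qed.

Lemma subseq_val_enum n (S : {set 'I_n}) : subseq [seq val x | x <- enum S] (iota 0 n).
Proof. by rewrite -val_enum_ord enumT; apply: map_subseq; exact: filter_subseq. Qed.

Lemma size_subseqs_upto m (s l : seq nat) : l \in subseqs_upto m s -> size l <= m.
Proof.
elim: s m l => [|x s IH] m l /=; first by rewrite inE => /eqP ->.
rewrite mem_cat => /orP [/IH //|]; case: m => // m /mapP [l' /IH le ->] //.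
Qed.

Definition smallest_attractor_sizeb (w : seq nat) (k : nat) : bool :=
  has (attractorb w) (subseqs_upto k (iota 0 (size w))) &&
  ~~ has (attractorb w) (subseqs_upto k.-1 (iota 0 (size w))).

Lemma smallest_attractor_sizebP (w : seq nat) k :
  smallest_attractor_sizeb w k -> smallest_attractor_size w k.
Proof.
move=> /andP [/hasP [l lk attl] none]; apply: smallest_attractor_sizeI.
  exists [set x : 'I_(size w) | val x \in l]; split; first exact: attractorb_sound.
  exact: leq_trans (card_set_mem_seq _ _) (size_subseqs_upto _ _ _ lk).
move=> S attS; rewrite leqNgt; apply: contra none => ltSk.
apply/hasP; exists [seq val x | x <- enum S]; last exact: attractorb_complete.
apply: mem_subseqs_upto; first exact: subseq_val_enum.
by rewrite size_map -cardE -ltnS (ltn_predK ltSk).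
Qed.

Definition vtm_factors3 : seq (seq nat) :=
  undup [seq mkseq (fun d => tm_diff (i + d)) 3 | i <- iota 0 12].

Lemma vtm_attractor_ge4 n (S : {set 'I_(size (vtm_prefix n))}) :
  14 <= n -> string_attractor S -> 4 <= #|S|.
Proof.
move=> le14n attS.
have factors f : f \in vtm_factors3 ->
    exists2 i, i + 2 < size (vtm_prefix n) & f = factor (vtm_prefix n) i (i + 2).
  rewrite mem_undup => /mapP [i]; rewrite mem_iota => lti ->.
  exists i; first by rewrite size_mkseq; lia.
  by rewrite vtm_prefixE factor_mkseq; [congr mkseq; lia | lia].
have := attractor_count_factors _ S 2 vtm_factors3 attS (undup_uniq _) factors.
have -> : size vtm_factors3 = 10 by vm_compute.
lia.
Qed.

(* Position s of vtm stands for the pair t[s] t[s+1], so a set S with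
   [tm_attractor N S] is a string attractor of vtm[0..N-1]. *)
Definition tm_covered (N : nat) (S : seq nat) (i l : nat) : Prop :=
  exists p s, [/\ s \in S, p + l <= N.+1, p <= s, s + 2 <= p + l &
                  forall d, d < l -> tm (p + d) = tm (i + d)].

Definition tm_attractor (N : nat) (S : seq nat) : Prop :=
  forall i l, 2 <= l -> i + l <= N.+1 -> tm_covered N S i l.

Definition tm_attractorb (N : nat) (S : seq nat) : bool :=
  all (fun i => all (fun l =>
    has (fun p => has (fun s => p <= s <= p + l - 2) S &&
                  all (fun d => tm (p + d) == tm (i + d)) (iota 0 l))
        (iota 0 (N.+2 - l)))
      (iota 2 (N - i))) (iota 0 N).

Lemma tm_attractorbP N S : tm_attractorb N S -> tm_attractor N S.
Proof.
move=> /allP att i l le2l lelN.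
have /allP att_i := att i ltac:(rewrite mem_iota; lia).
have /hasP [p] := att_i l ltac:(rewrite mem_iota; lia).
rewrite mem_iota => ltp /andP [/hasP [s Ss /andP [leps lesl]] /allP eq_tm].
exists p, s; split=> //; try lia.
by move=> d ltd; apply/eqP/eq_tm; rewrite mem_iota.
Qed.

Lemma tm_covered_double_long N S i l : 3 <= l -> i + l <= N.+1 ->
  (forall M, (N - 1) %/ 2 <= M <= N %/ 2 -> tm_attractor M S) ->
  tm_covered N [seq s.*2.+1 | s <- S] i l.
Proof.
move=> le3l lelN attS.
(* Up to the shift [i %% 2], the factor lies in the image under the Thue-Morse
   morphism of the factor of length l' at i' = i/2; M is chosen so that the image
   of an occurrence inside t[0..M] stays inside t[0..N]. *)
pose e := i + l - 1; pose M := (N - e %% 2) %/ 2.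
pose i' := i %/ 2; pose l' := (e %/ 2 - i').+1.
have [p [s [Ss lep leps lesp eq_tm]]] :=
  attS M ltac:(rewrite /M; lia) i' l' ltac:(rewrite /l' /i' /e; lia)
    ltac:(rewrite /l' /i' /e /M; lia).
exists (p.*2 + i %% 2), s.*2.+1; split; first exact: map_f.
- by rewrite /M /l' /i' /e in lep leps lesp *; lia.
- by lia.
- by rewrite /M /l' /i' /e in lep leps lesp *; lia.
move=> d ltd.
have -> : i + d = i'.*2 + (i %% 2 + d) by rewrite /i'; have := divn_eq i 2; lia.
by rewrite -addnA !tm_double_add eq_tm //; rewrite /l' /i' /e; lia.
Qed.

Lemma tm_pairs_early (a b : bool) : exists2 j, j <= 5 & tm j = a /\ tm j.+1 = b.
Proof. by case: a; case: b; [exists 1 | exists 2 | exists 0 | exists 5]. Qed.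

Lemma tm_covered_double_pair N S i : 12 <= N -> i + 2 <= N.+1 ->
  tm_attractor (N %/ 2) S -> tm_covered N [seq s.*2.+1 | s <- S] i 2.
Proof.
move=> le12N le_iN attS.
(* [a b] occurs at 2j+1 as soon as [~~ a, b] occurs at j. *)
have [j le_j5 [tm_j tm_jS]] := tm_pairs_early (~~ tm i) (tm i.+1).
have [p [s [Ss lep leps lesp eq_tm]]] := attS j 2 (leqnn 2) ltac:(lia).
have {leps lesp} Esp : s = p by lia.
subst s.
exists p.*2.+1, p.*2.+1; split; [exact: map_f | lia | by [] | by [] |].
have tm_p := eq_tm 0 isT; have tm_pS := eq_tm 1 isT; rewrite !addn0 !addn1 in tm_p tm_pS.
case=> [|[|//]] _; rewrite ?addn0 ?addn1.
  by rewrite tm_doubleS tm_p tm_j negbK.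
by rewrite -doubleS tm_double tm_pS tm_jS.
Qed.

Lemma tm_attractor_double N S : 12 <= N ->
  (forall M, (N - 1) %/ 2 <= M <= N %/ 2 -> tm_attractor M S) ->
  tm_attractor N [seq s.*2.+1 | s <- S].
Proof.
move=> le12N attS i l le2l lelN.
case: (ltnP 2 l) => [le3l | le_l2].
  exact: tm_covered_double_long.
have {le2l le_l2} El : l = 2 by lia.
subst l; apply: tm_covered_double_pair => //; apply: attS; lia.
Qed.

(* Found by computer search; they work for N in [12, 19], [17, 23] and [23, 25]. *)
Definition tm_base_attractors : seq (seq nat) :=
  [:: [:: 3; 5; 7; 11]; [:: 5; 7; 11; 15]; [:: 5; 7; 15; 19]].

Lemma tm_attractor_consecutive N : 12 <= N ->
  exists2 S, size S = 4 & tm_attractor N S /\ tm_attractor N.+1 S.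
Proof.
elim/ltn_ind: N => N IH le12N.
case: (leqP N 24) => [leN24 | lt24N].
  have base : all (fun N => has (fun S =>
      [&& size S == 4, tm_attractorb N S & tm_attractorb N.+1 S]) tm_base_attractors)
    (iota 12 13) by vm_compute.
  have /hasP [S _ /and3P [/eqP sizeS /tm_attractorbP attN /tm_attractorbP attN1]] :=
    allP base N ltac:(rewrite mem_iota; lia).
  exact: ex_intro2 sizeS (conj attN attN1).
have [S sizeS [attM attM1]] := IH ((N - 1) %/ 2) ltac:(lia) ltac:(lia).
have attS M : (N - 1) %/ 2 <= M <= (N - 1) %/ 2 + 1 -> tm_attractor M S.
  by move=> rangeM; have [->|->] : M = (N - 1) %/ 2 \/ M = ((N - 1) %/ 2).+1 by lia.
exists [seq s.*2.+1 | s <- S]; first by rewrite size_map.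
by split; apply: tm_attractor_double => [|M rangeM]; try apply: attS; lia.
Qed.

Lemma vtm_attractor_of_tm N S : tm_attractor N S ->
  string_attractor [set x : 'I_(size (vtm_prefix N)) | val x \in S].
Proof.
move=> attS i j /andP [leij ltj]; rewrite size_mkseq in ltj.
have [p [s [Ss lep leps lesp eq_tm]]] := attS i (j - i + 2) ltac:(lia) ltac:(lia).
exists p, (p + (j - i)); split.
- by rewrite size_mkseq; lia.
- rewrite vtm_prefixE !factor_mkseq; try lia.
  rewrite (_ : p + (j - i) - p = j - i); last by lia.
  apply/eq_in_map => d; rewrite mem_iota => /andP [_ ltd].
  by rewrite /tm_diff -!addnS !eq_tm //; lia.
- have lts : s < size (vtm_prefix N) by rewrite size_mkseq; lia.
  by exists (Ordinal lts); rewrite ?inE //=; lia.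
Qed.

Theorem theorem7 (n : nat) : 1 <= n ->
  smallest_attractor_size (vtm_prefix n)
    (if n == 1 then 1 else if n == 2 then 2 else if n <= 6 then 3 else 4).
Proof.
move=> n_gt0; case: (ltnP n 14) => [ltn14 | le14n].
  rewrite vtm_prefixE; apply: smallest_attractor_sizebP.
  have small : all (fun n => smallest_attractor_sizeb (mkseq tm_diff n)
      (if n == 1 then 1 else if n == 2 then 2 else if n <= 6 then 3 else 4))
    (iota 1 13) by vm_compute.
  by apply: (allP small); rewrite mem_iota; lia.
rewrite !ifF; try by apply/negbTE; lia.
apply: smallest_attractor_sizeI => [|S]; last exact: vtm_attractor_ge4.
have [S sizeS [attS _]] := tm_attractor_consecutive n ltac:(lia).
exists [set x : 'I_(size (vtm_prefix n)) | val x \in S].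
by split; [exact: vtm_attractor_of_tm | rewrite -sizeS card_set_mem_seq].
Qed.
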